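(* Let $S$ be a finite set of discrete probability distributions. For $x\in(0,1]$ define $C_S(x)$ to be the smallest $y\in[0,1]$ with $\textsc{Rem-Mass}^{\textsc{advanced}}_S(y)\ge x$. Then $C_S$ is non-decreasing, and whenever, during the run of the greedy coupling algorithm on $S$, there is $x$ mass left to be coupled, the next state created by the greedy algorithm has mass at least $C_S(x)$.
   Context: Distributions are finite vectors $p(1)\ge\dots\ge p(n)\ge0$ summing to $1$. Greedy coupling algorithm: maintain the remaining masses of the states of each distribution in $S$. Repeatedly: let $r=\min_{p\in S}\max_j p(j)$; if $r=0$ stop; otherwise create a coupling state of mass $r$ and subtract $r$ from the largest remaining state of every distribution (ties broken arbitrarily). For $y\in[0,1]$, $$\textsc{Rem-Mass}^{\textsc{advanced}}_S(y)=\max_{p\in S}\sum_{j=1}^n\begin{cases}y & y\le p(j)/2,\\ p(j)/2 & p(j)/2<y<p(j),\\ p(j) & p(j)\le y.\end{cases}$$ *)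

From HB Require Import structures.
From mathcomp Require Import all_boot all_order all_algebra.
From mathcomp Require Import boolp classical_sets reals.
Set Implicit Arguments. Unset Strict Implicit. Unset Printing Implicit Defensive.
Import Order.TTheory GRing.Theory Num.Theory.
Local Open Scope ring_scope.
Local Open Scope classical_set_scope.

Definition is_distribution {R : realType} {n : nat} (p : 'I_n -> R) : Prop :=
  (forall j, 0 <= p j) /\
  (forall i j : 'I_n, (i <= j)%N -> p j <= p i) /\
  \sum_(j < n) p j = 1.

Definition rm_term {R : realType} (pj y : R) : R :=
  if y <= pj / 2 then y else if y < pj then pj / 2 else pj.

Definition rem_mass_adv {R : realType} {m n : nat} (S : 'I_m -> 'I_n -> R) (y : R) : R :=
  \big[Num.max/0]_(i < m) \sum_(j < n) rm_term (S i j) y.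

Definition C_S {R : realType} {m n : nat} (S : 'I_m -> 'I_n -> R) (x : R) : R :=
  inf [set y : R | 0 <= y <= 1 /\ x <= rem_mass_adv S y].

Definition maxrem {R : realType} {m n : nat} (q : 'I_m -> 'I_n -> R) (i : 'I_m) : R :=
  \big[Num.max/0]_(j < n) q i j.

(* One step of the greedy coupling algorithm (ties broken arbitrarily):
   from remaining masses q, a coupling state of mass r > 0 is created, where
   r = min_i max_j q i j, and r is subtracted from a largest remaining state
   of every distribution, giving q'. *)
Definition greedy_step {R : realType} {m n : nat}
    (q : 'I_m -> 'I_n -> R) (r : R) (q' : 'I_m -> 'I_n -> R) : Prop :=
  0 < r /\
  (exists i, r = maxrem q i) /\ (forall i, r <= maxrem q i) /\
  forall i, exists j0 : 'I_n,
    q i j0 = maxrem q i /\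
    q' i j0 = q i j0 - r /\
    forall j, j != j0 -> q' i j = q i j.

(* A greedy step of mass r lowers one state of every distribution by r and is
   bounded by the largest remaining state of each of them, so the masses rs t
   of successive coupling states are non-increasing.  Hence, when the next
   state has mass r, every state of a distribution p is either untouched,
   equal to p(j), or already lowered by at least r, and all of them are at
   most r.  Such a remaining mass q is at most the contribution of p(j) to
   Rem-Mass^advanced(r): if p(j)/2 < r < p(j) it cannot be untouched, so
   q <= p(j) - r < p(j)/2.  For the distribution attaining r the remaining
   masses sum to x, hence x <= Rem-Mass^advanced(r) and C_S(x) <= r. *)

From HB Require Import structures.
From mathcomp Require Import all_boot all_order all_algebra.
From mathcomp Require Import boolp classical_sets reals.
From mathcomp Require Import lra.

Set Implicit Arguments.
Unset Strict Implicit.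
Unset Printing Implicit Defensive.

Import Order.TTheory GRing.Theory Num.Theory.
Local Open Scope ring_scope.

Section RemMass.
Variables (R : realType) (m n : nat).
Implicit Types (S : 'I_m -> 'I_n -> R) (p : 'I_n -> R).

Lemma distribution_le1 p : is_distribution p -> forall j, p j <= 1.
Proof.
move=> [p_ge0 [_ sum_p]] j; rewrite -sum_p (bigD1 j) //= lerDl.
exact: sumr_ge0.
Qed.

Lemma rm_term_id (pj y : R) : 0 <= pj -> pj <= y -> rm_term pj y = pj.
Proof.
move=> pj_ge0 pj_le_y; rewrite /rm_term ltNge pj_le_y /=.
by case: ifP => // y_le; lra.
Qed.

Lemma rm_term_ge (pj q y : R) :
  0 <= y -> q <= y -> q = pj \/ q <= pj - y -> q <= rm_term pj y.
Proof.
move=> y_ge0 q_le_y q_pj; rewrite /rm_term.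
case: ifP => // /negbT; rewrite -ltNge => half_lt.
by case: ifP => [y_lt|/negbT]; case: q_pj => q_pj; lra.
Qed.

Lemma rem_mass_adv_ge S i y :
  \sum_j rm_term (S i j) y <= rem_mass_adv S y.
Proof. exact: le_bigmax. Qed.

Lemma rem_mass_adv1 S :
  (0 < m)%N -> (forall i, is_distribution (S i)) -> 1 <= rem_mass_adv S 1.
Proof.
move=> m_gt0 hS; pose i0 := Ordinal m_gt0.
have [S_ge0 [_ sum_S]] := hS i0.
apply: le_trans (rem_mass_adv_ge S i0 1); rewrite -{1}sum_S; apply: ler_sum => j _.
by rewrite rm_term_id ?S_ge0 ?(distribution_le1 (hS i0)).
Qed.

Lemma C_S_le S x y : 0 <= y <= 1 -> x <= rem_mass_adv S y -> C_S S x <= y.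
Proof.
move=> y01 x_le; apply: ge_inf => //.
by exists 0 => z [/andP[]].
Qed.

Lemma C_S_le_homo S x1 x2 :
  x1 <= x2 -> x2 <= rem_mass_adv S 1 -> C_S S x1 <= C_S S x2.
Proof.
move=> x12 x2_le; apply: lb_le_inf.
  by exists 1; split; first by rewrite ler01 lexx.
by move=> y [y01 x2_le']; apply: C_S_le y01 (le_trans x12 x2_le').
Qed.

End RemMass.

Section GreedyStep.
Variables (R : realType) (m n : nat).
Variables (q q' : 'I_m -> 'I_n -> R) (r : R).
Hypothesis step : greedy_step q r q'.

Lemma greedy_step_le i j : q' i j <= q i j.
Proof.
have [r_gt0 [_ [_ /(_ i) [j0 [_ [q'j0 q'j]]]]]] := step.
by case: (eqVneq j j0) => [->|/q'j ->]; rewrite ?q'j0; lra.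
Qed.

Lemma greedy_step_sum i : \sum_j q' i j = \sum_j q i j - r.
Proof.
have [_ [_ [_ /(_ i) [j0 [_ [q'j0 q'j]]]]]] := step.
rewrite (bigD1 j0) //= [in RHS](bigD1 j0) //= q'j0.
by rewrite (eq_bigr (q i)) => [|j /q'j]; first lra.
Qed.

Lemma greedy_step_next (q'' : 'I_m -> 'I_n -> R) (r' : R) :
  greedy_step q' r' q'' -> r' <= r.
Proof.
move=> [_ [_ [r'_le _]]]; have [_ [[i0 ->] _]] := step.
apply: le_trans (r'_le i0) _; apply: le_bigmax2 => j _.
exact: greedy_step_le.
Qed.

End GreedyStep.

Section GreedyRun.
Variables (R : realType) (m n : nat).
Variables (qs : nat -> 'I_m -> 'I_n -> R) (rs : nat -> R) (k : nat).
Hypothesis run : forall t, (t <= k)%N -> greedy_step (qs t) (rs t) (qs t.+1).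

Lemma greedy_run_gt0 t : (t <= k)%N -> 0 < rs t.
Proof. by move=> /run []. Qed.

Lemma greedy_run_noninc s t : (s <= t <= k)%N -> rs t <= rs s.
Proof.
move=> /andP[st tk].
have : {in [pred t | t <= k]%N &, {homo rs : a b / (a <= b)%N >-> b <= a}}.
  apply: homo_leq_in => //=.
  - by move=> b a c ba cb; apply: le_trans cb ba.
  - by move=> a b _ bk c /andP[_ /ltnW/leq_trans]; apply.
  - move=> a _; rewrite inE => Sak.
    exact (greedy_step_next (run (ltnW Sak)) (run Sak)).
by apply; rewrite ?inE ?(leq_trans st tk).
Qed.

Lemma greedy_run_sum t i : (t <= k.+1)%N ->
  \sum_j qs t i j = \sum_j qs 0%N i j - \sum_(s < t) rs s.
Proof.
elim: t => [|t IH] tk; first by rewrite big_ord0 subr0.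
rewrite (greedy_step_sum (run tk)) IH ?big_ord_recr /=; [lra | exact: ltnW].
Qed.

Lemma greedy_run_lowered t i j : (t <= k.+1)%N ->
  qs t i j = qs 0%N i j \/ qs t i j <= qs 0%N i j - rs k.
Proof.
elim: t => [|t IH] tk; first by left.
have [rt_gt0 [_ [_ /(_ i) [j0 [_ [q'j0 q'j]]]]]] := run tk.
case: (eqVneq j j0) => [j_j0|/q'j ->]; last exact: IH (ltnW tk).
subst j0; have rk_le : rs k <= rs t.
  by apply: greedy_run_noninc; rewrite -ltnS tk leqnn.
by right; rewrite q'j0; case: (IH (ltnW tk)) => [->|]; lra.
Qed.

Lemma greedy_run_rem_mass i : rs k = maxrem (qs k) i ->
  \sum_j qs 0%N i j - \sum_(t < k) rs t <= \sum_j rm_term (qs 0%N i j) (rs k).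
Proof.
move=> rk_max; rewrite -greedy_run_sum //; apply: ler_sum => j _.
apply: rm_term_ge; first exact/ltW/greedy_run_gt0.
  by rewrite rk_max; apply: le_bigmax.
exact: greedy_run_lowered.
Qed.

End GreedyRun.

Theorem lemma6 (R : realType) (m n : nat) (S : 'I_m -> 'I_n -> R)
  (hm : (0 < m)%N) (hS : forall i, is_distribution (S i)) :
  (forall x1 x2 : R, 0 < x1 -> x1 <= x2 -> x2 <= 1 -> C_S S x1 <= C_S S x2) /\
  (forall (qs : nat -> 'I_m -> 'I_n -> R) (rs : nat -> R) (k : nat),
     qs 0%N = S ->
     (forall t, (t <= k)%N -> greedy_step (qs t) (rs t) (qs t.+1)) ->
     let x := 1 - \sum_(t < k) rs t in
     0 < x -> C_S S x <= rs k).
Proof.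
have rem1 := rem_mass_adv1 hm hS.
split=> [x1 x2 _ x12 x2_le1|qs rs k q0 run x x_gt0].
  exact: C_S_le_homo x12 (le_trans x2_le1 rem1).
have [rk_ge1|rk_lt1] := leP 1 (rs k).
  apply: le_trans rk_ge1; apply: C_S_le; first by rewrite ler01 lexx.
  have : 0 <= \sum_(t < k) rs t.
    by apply: sumr_ge0 => t _; apply/ltW/(greedy_run_gt0 run)/ltnW.
  by rewrite /x; lra.
have rk_gt0 := greedy_run_gt0 run (leqnn k).
apply: C_S_le; first by apply/andP; split; lra.
have [_ [[i0 rk_max] _]] := run k (leqnn k).
have [_ [_ sum_S]] := hS i0.
apply: le_trans (rem_mass_adv_ge S i0 _).
rewrite /x -sum_S -q0; exact (greedy_run_rem_mass run rk_max).
Qed.
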